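(* For every even integer $n \ge 2$ and every $\epsilon$ with $0<\epsilon<\tfrac{1}{2}$, consider the instance with $n+1$ bamboos and growth rates $h(1)=1$, $h(2)=\cdots=h(n+1)=\tfrac12+\epsilon$. For this instance $H^{PW}=n+1$ and $H^*\le \tfrac{n}{2}+1+(n+2)\epsilon$. Consequently, $\sup H^{PW}/H^* \ge 2$, the supremum being taken over all instances; that is, the approximation ratio $2$ of algorithm PW is asymptotically tight.
   Context: An instance consists of an integer $n\ge 1$ and growth rates $1=h(1)\ge h(2)\ge\cdots\ge h(n)>0$ of bamboos $b_1,\dots,b_n$. Bamboo Garden Trimming (discrete version): - All heights are $0$ initially. - On each day $t=1,2,\dots$ every bamboo $b_j$ grows by $h(j)$. - At the end of each day the gardener cuts exactly one bamboo $\sigma(t)\in\{1,\dots,n\}$ back to height $0$. The height of a schedule $\sigma:\mathbb{N}\to\{1,\dots,n\}$ is the supremum, over all days $t$ and all $j$, of the height of $b_j$ at the end of day $t$ just before the cut. $H^*$ denotes the infimum of this height over all schedules. Algorithm PW: - For each $j$, let $h'(j)=2^{-k}$, where $k\ge 0$ is the integer with $2^{-(k+1)}<h(j)\le 2^{-k}$. - Bamboos are grouped into $\alpha=\lceil\sum_{j=1}^n h'(j)\rceil$ partitions, with rounded growths summing to at most $1$ in each partition. - The partitions are served cyclically. - Its value is $H^{PW}=\alpha\cdot h(1)=\lceil\sum_{j=1}^n h'(j)\rceil$. *)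

From Stdlib Require Import Reals Lra Lia Arith ClassicalEpsilon.
Open Scope R_scope.

(** An instance: n bamboos b_1..b_n with growth rates h 1, ..., h n
    (values of h outside 1..n are irrelevant). *)
Definition valid_instance (n : nat) (h : nat -> R) : Prop :=
  (1 <= n)%nat /\ h 1%nat = 1 /\
  (forall j, (1 <= j < n)%nat -> h (S j) <= h j) /\
  0 < h n.

(** A schedule: sigma t is the bamboo cut at the end of day t (t >= 1). *)
Definition valid_schedule (n : nat) (sigma : nat -> nat) : Prop :=
  forall t, (1 <= t)%nat -> (1 <= sigma t <= n)%nat.

(** Height of b_j at the end of day t, after the cut of day t
    (day 0 = initial state, all heights 0). *)
Fixpoint post_height (h : nat -> R) (sigma : nat -> nat) (j t : nat) : R :=
  match t with
  | O => 0
  | S t' => if Nat.eqb (sigma (S t')) j then 0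
            else post_height h sigma j t' + h j
  end.

(** Height of b_j at the end of day t (t >= 1), just before the cut. *)
Definition pre_height (h : nat -> R) (sigma : nat -> nat) (j t : nat) : R :=
  post_height h sigma j (pred t) + h j.

Definition sched_height_le (n : nat) (h : nat -> R) (sigma : nat -> nat)
    (M : R) : Prop :=
  forall t j, (1 <= t)%nat -> (1 <= j <= n)%nat -> pre_height h sigma j t <= M.

(** "H^* <= b": the infimum over all schedules of their heights is <= b. *)
Definition Hstar_le (n : nat) (h : nat -> R) (b : R) : Prop :=
  forall delta, 0 < delta ->
    exists sigma, valid_schedule n sigma /\ sched_height_le n h sigma (b + delta).

(** PW rounding: the exponent k >= 0 with 2^-(k+1) < x <= 2^-k
    (chosen by the choice operator; unique when 0 < x <= 1). *)
Definition pw_exp (x : R) : nat :=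
  epsilon (inhabits 0%nat) (fun k => / 2 ^ (S k) < x <= / 2 ^ k).

Definition pw_round (x : R) : R := / 2 ^ (pw_exp x).

Definition Rceil (x : R) : Z := (- Int_part (- x))%Z.

Definition pw_alpha (n : nat) (h : nat -> R) : Z :=
  Rceil (sum_f_R0 (fun i => pw_round (h (S i))) (pred n)).

Definition HPW (n : nat) (h : nat -> R) : R := IZR (pw_alpha n h) * h 1%nat.

Definition tight_rates (eps : R) (j : nat) : R :=
  if Nat.eqb j 1 then 1 else / 2 + eps.

(* Every rate of the instance lies in (1/2, 1], so PW rounds each of the n+1 rates up
   to 1 and uses n+1 partitions.  With m = n/2, a better schedule works in rounds of
   m+1 days: each round cuts b_1 once and one half of the other 2m bamboos, alternating
   halves.  So b_1 is cut every m+1 days and every other bamboo every 2(m+1) days,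
   and a bamboo cut at least every k days never exceeds k times its rate.  The heights
   are thus at most m+1 and 2(m+1)(1/2+eps) = n/2 + 1 + (n+2) eps.  Choosing
   eps = 1/(4(n+2)) gives the ratio (n+1)/(n/2+5/4), which tends to 2. *)

From Stdlib Require Import Reals Arith Lia Lra ClassicalEpsilon.
Open Scope R_scope.

Section Heights.

Variables (h : nat -> R) (sigma : nat -> nat) (j : nat).
Hypothesis h_ge0 : 0 <= h j.

Lemma post_height_cut s : sigma s = j -> post_height h sigma j s = 0.
Proof.
  intros Hs; destruct s as [|s]; simpl; [reflexivity|].
  now rewrite Hs, Nat.eqb_refl.
Qed.

Lemma post_height_ge0 t : 0 <= post_height h sigma j t.
Proof.
  induction t as [|t IH]; simpl; [lra|].
  destruct (Nat.eqb (sigma (S t)) j); lra.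
Qed.

Lemma post_height_growth s t : (s <= t)%nat ->
  post_height h sigma j t <= post_height h sigma j s + INR (t - s) * h j.
Proof.
  intros Hst; induction Hst as [|t Hst IH].
  - rewrite Nat.sub_diag; simpl; lra.
  - simpl post_height; rewrite Nat.sub_succ_l, S_INR by exact Hst.
    pose proof (post_height_ge0 s); pose proof (pos_INR (t - s)).
    destruct (Nat.eqb (sigma (S t)) j); nra.
Qed.

Definition cut_every (k : nat) : Prop :=
  forall d, exists s, (d < s <= d + k)%nat /\ sigma s = j.

Lemma pre_height_le_cut_every k t : cut_every k -> (1 <= t)%nat ->
  pre_height h sigma j t <= INR k * h j.
Proof.
  intros Hcut Ht; unfold pre_height.
  destruct k as [|k].
  { destruct (Hcut 0%nat) as [s [Hs _]]; lia. }
  enough (post_height h sigma j (pred t) <= INR k * h j) by (rewrite S_INR; lra).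
  destruct (le_lt_dec (pred t) k) as [Hsmall|Hlarge].
  - pose proof (post_height_growth 0 (pred t) ltac:(lia)) as G; simpl in G.
    pose proof (le_INR (pred t - 0) k ltac:(lia)); nra.
  - destruct (Hcut (pred t - S k)%nat) as [s [Hs Hsj]].
    pose proof (post_height_growth s (pred t) ltac:(lia)) as G.
    rewrite (post_height_cut s Hsj) in G.
    pose proof (le_INR (pred t - s) k ltac:(lia)); nra.
Qed.

Lemma cut_every_of_progression p r : (0 < p)%nat -> (r <= p)%nat ->
  (forall q, sigma (r + q * p) = j) -> cut_every p.
Proof.
  intros Hp Hr Hprog d.
  destruct (le_lt_dec r d) as [Hrd|Hdr].
  - exists (r + S ((d - r) / p) * p)%nat; split; [|apply Hprog].
    pose proof (Nat.div_mod (d - r) p ltac:(lia)).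
    pose proof (Nat.mod_upper_bound (d - r) p ltac:(lia)).
    nia.
  - exists (r + 0 * p)%nat; split; [lia|apply Hprog].
Qed.

End Heights.

Lemma Hstar_le_of_schedule n h sigma b :
  valid_schedule n sigma -> sched_height_le n h sigma b -> Hstar_le n h b.
Proof.
  intros Hvalid Hheight delta Hdelta; exists sigma; split; [exact Hvalid|].
  intros t j Ht Hj; specialize (Hheight t j Ht Hj); lra.
Qed.

Definition tight_schedule (m t : nat) : nat :=
  let r := (t mod (2 * S m))%nat in
  if Nat.eqb r 0 then 1%nat
  else if Nat.leb r m then S r
  else if Nat.eqb r (S m) then 1%nat
  else r.

Definition tight_residue (m j : nat) : nat :=
  if Nat.leb j (S m) then pred j else j.

Lemma tight_schedule_valid m : valid_schedule (S (2 * m)) (tight_schedule m).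
Proof.
  intros t _; unfold tight_schedule.
  pose proof (Nat.mod_upper_bound t (2 * S m) ltac:(lia)).
  destruct (Nat.eqb_spec (t mod (2 * S m)) 0); [lia|].
  destruct (Nat.leb_spec (t mod (2 * S m)) m); [lia|].
  destruct (Nat.eqb_spec (t mod (2 * S m)) (S m)); lia.
Qed.

Lemma tight_schedule_periodic m t q :
  tight_schedule m (t + q * (2 * S m)) = tight_schedule m t.
Proof. unfold tight_schedule; now rewrite Nat.Div0.mod_add. Qed.

Lemma tight_schedule_first m q : tight_schedule m (q * S m) = 1%nat.
Proof.
  destruct (Nat.Even_or_Odd q) as [[a ->]|[a ->]].
  - replace (2 * a * S m)%nat with (0 + a * (2 * S m))%nat by lia.
    rewrite tight_schedule_periodic; unfold tight_schedule.
    now rewrite Nat.Div0.mod_0_l.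
  - replace ((2 * a + 1) * S m)%nat with (S m + a * (2 * S m))%nat by lia.
    rewrite tight_schedule_periodic; unfold tight_schedule.
    rewrite Nat.mod_small by lia.
    destruct (Nat.leb_spec (S m) m); [lia|].
    now rewrite Nat.eqb_refl.
Qed.

Lemma tight_schedule_residue m j : (2 <= j <= S (2 * m))%nat ->
  tight_schedule m (tight_residue m j) = j.
Proof.
  intros Hj; unfold tight_schedule, tight_residue.
  destruct (Nat.leb_spec j (S m)) as [Hle|Hgt].
  - rewrite Nat.mod_small by lia.
    destruct (Nat.eqb_spec (pred j) 0); [lia|].
    destruct (Nat.leb_spec (pred j) m); lia.
  - rewrite Nat.mod_small by lia.
    destruct (Nat.eqb_spec j 0); [lia|].
    destruct (Nat.leb_spec j m); [lia|].
    destruct (Nat.eqb_spec j (S m)); lia.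
Qed.

Lemma tight_schedule_height m eps : 0 <= eps ->
  sched_height_le (S (2 * m)) (tight_rates eps) (tight_schedule m)
    (INR m + 1 + (2 * INR m + 2) * eps).
Proof.
  intros Heps t j Ht Hj.
  destruct (Nat.eq_dec j 1) as [->|Hj1].
  - assert (Hcut : cut_every (tight_schedule m) 1 (S m)).
    { apply (cut_every_of_progression _ _ _ 0); [lia|lia|].
      intros q; apply tight_schedule_first. }
    pose proof (pre_height_le_cut_every (tight_rates eps) _ 1 ltac:(cbn; lra)
      _ t Hcut Ht) as B.
    rewrite S_INR in B; cbn [tight_rates Nat.eqb] in B.
    assert (0 <= INR m) by apply pos_INR; nra.
  - assert (Hcut : cut_every (tight_schedule m) j (2 * S m)).
    { apply (cut_every_of_progression _ _ _ (tight_residue m j)).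
      - lia.
      - unfold tight_residue; destruct (Nat.leb j (S m)); lia.
      - intros q; rewrite tight_schedule_periodic.
        apply tight_schedule_residue; lia. }
    assert (Hrate : tight_rates eps j = / 2 + eps).
    { unfold tight_rates; destruct (Nat.eqb_spec j 1); [lia|reflexivity]. }
    pose proof (pre_height_le_cut_every (tight_rates eps) _ j ltac:(rewrite Hrate; lra)
      _ t Hcut Ht) as B.
    rewrite Hrate, mult_INR, (S_INR m) in B.
    replace (INR 2) with 2 in B by (simpl; lra); lra.
Qed.

Lemma tight_rates_valid n eps : (1 <= n)%nat -> - / 2 < eps <= / 2 ->
  valid_instance n (tight_rates eps).
Proof.
  intros Hn Heps; unfold valid_instance, tight_rates.
  repeat split; [exact Hn| |].
  - intros j Hj.
    destruct (Nat.eqb_spec (S j) 1); [lia|].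
    destruct (Nat.eqb j 1); lra.
  - destruct (Nat.eqb n 1); lra.
Qed.

Lemma pw_round_gt_half x : / 2 < x <= 1 -> pw_round x = 1.
Proof.
  intros Hx; unfold pw_round, pw_exp.
  set (P := fun k : nat => / 2 ^ S k < x <= / 2 ^ k).
  assert (HP : P (epsilon (inhabits 0%nat) P)).
  { apply epsilon_spec; exists 0%nat; unfold P; simpl.
    rewrite Rmult_1_r, Rinv_1; lra. }
  destruct (epsilon (inhabits 0%nat) P) as [|k]; [apply Rinv_1|].
  exfalso; unfold P in HP; simpl in HP.
  assert (1 <= 2 ^ k) by (apply pow_R1_Rle; lra).
  assert (/ (2 * 2 ^ k) <= / 2) by (apply Rinv_le_contravar; lra).
  lra.
Qed.

Lemma Rceil_INR n : Rceil (INR n) = Z.of_nat n.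
Proof.
  unfold Rceil, Int_part; rewrite INR_IZR_INZ, <- opp_IZR.
  rewrite <- (up_tech (IZR (- Z.of_nat n)) (- Z.of_nat n)%Z); [lia|lra|].
  rewrite plus_IZR; lra.
Qed.

Lemma HPW_tight_rates n eps : 0 < eps <= / 2 ->
  HPW (S n) (tight_rates eps) = INR (S n).
Proof.
  intros Heps; unfold HPW, pw_alpha; simpl pred.
  rewrite (sum_eq _ (fun _ => 1)).
  - rewrite sum_cte, Rmult_1_l, Rceil_INR, <- INR_IZR_INZ.
    unfold tight_rates; simpl; lra.
  - intros i _; apply pw_round_gt_half; unfold tight_rates.
    destruct (Nat.eqb (S i) 1); lra.
Qed.

Lemma ratio_approaches_two c : c < 2 ->
  exists m : nat, c * (INR m + 5 / 4) < 2 * INR m + 1.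
Proof.
  intros Hc.
  destruct (INR_archimed (2 - c) (3 / 2) ltac:(lra)) as [N HN].
  exists (S N).
  assert (INR N <= INR (S N)) by (apply le_INR; lia).
  assert (0 <= INR N) by apply pos_INR.
  nra.
Qed.

Lemma tight_instance m eps : 0 < eps < / 2 ->
  valid_instance (S (2 * m)) (tight_rates eps) /\
  HPW (S (2 * m)) (tight_rates eps) = INR (S (2 * m)) /\
  Hstar_le (S (2 * m)) (tight_rates eps) (INR m + 1 + (2 * INR m + 2) * eps).
Proof.
  intros Heps; split; [|split].
  - apply tight_rates_valid; lra || lia.
  - apply HPW_tight_rates; lra.
  - apply (Hstar_le_of_schedule _ _ (tight_schedule m)).
    + apply tight_schedule_valid.
    + apply tight_schedule_height; lra.
Qed.

Theorem lemma1 :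
  (forall (n : nat) (eps : R),
      Nat.Even n -> (2 <= n)%nat -> 0 < eps < / 2 ->
      valid_instance (S n) (tight_rates eps) /\
      HPW (S n) (tight_rates eps) = INR (S n) /\
      Hstar_le (S n) (tight_rates eps) (INR n / 2 + 1 + (INR n + 2) * eps))
  /\
  (forall c : R, c < 2 ->
      exists (n : nat) (h : nat -> R) (b : R),
        valid_instance n h /\ Hstar_le n h b /\ c * b < HPW n h).
Proof.
  split.
  - intros n eps [m ->] _ Heps.
    rewrite mult_INR; replace (INR 2 * INR m / 2) with (INR m) by (simpl; field).
    replace (INR 2 * INR m + 2) with (2 * INR m + 2) by reflexivity.
    apply tight_instance; exact Heps.
  - intros c Hc.
    destruct (ratio_approaches_two c Hc) as [m Hratio].
    set (eps := / (4 * (2 * INR m + 2))).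
    assert (Hm0 : 0 <= INR m) by apply pos_INR.
    assert (Heps : 0 < eps < / 2) by (unfold eps; split;
      [apply Rinv_0_lt_compat | apply Rinv_lt_contravar]; lra).
    destruct (tight_instance m eps Heps) as [Hvalid [Hpw Hstar]].
    exists (S (2 * m)), (tight_rates eps), (INR m + 1 + (2 * INR m + 2) * eps).
    split; [exact Hvalid|split; [exact Hstar|]].
    rewrite Hpw, S_INR, mult_INR.
    replace ((2 * INR m + 2) * eps) with (/ 4) by (unfold eps; field; lra).
    simpl (INR 2); lra.
Qed.
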